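(* In the setting of the context, for any $H\in\mathbb S^n$, $$\langle\widetilde{\mathcal D}(H),\widetilde{\mathcal D}^\perp(H)\rangle=2\langle\tilde\Theta\circ\hat H_{\gamma\alpha},\tilde\Theta^\perp\circ\hat H_{\gamma\alpha}\rangle\ge0,$$ with equality if and only if $\hat H_{\gamma\alpha}=0$, and $$\|H\|_F^2-\|\widetilde{\mathcal M}(H)\|_F^2=\|\mathcal P\widetilde{\mathcal D}(H)\|_F^2+\|\mathcal P^\perp\widetilde{\mathcal D}^\perp(H)\|_F^2+4\langle\tilde\Theta\circ\hat H_{\gamma\alpha},\tilde\Theta^\perp\circ\hat H_{\gamma\alpha}\rangle.$$
   Context: $\mathbb S^p$: real symmetric $p\times p$ matrices with trace inner product and Frobenius norm; $\Pi_{\mathbb S^p_+}$ projection onto the PSD cone; $\circ$ Hadamard product. $\mathcal AX=(\langle A_i,X\rangle)_i$ ($A_i\in\mathbb S^n$) surjective, $\mathcal P=\mathcal A^*(\mathcal A\mathcal A^* )^{-1}\mathcal A$, $\mathcal P^\perp=\mathrm{Id}-\mathcal P$. $Z_\star=X_\star-\sigma S_\star$ ($\sigma>0$) for a KKT point $(X_\star,y_\star,S_\star)$ of min $\langle C,X\rangle$ s.t. $\mathcal AX=b$, $X\succeq0$ / max $b^\top y$ s.t. $\mathcal A^*y+S=C$, $S\succeq0$; $r=\operatorname{rank}X_\star$, $s=\operatorname{rank}S_\star$; $Z_\star=Q_\star\operatorname{diag}(\lambda_1,\dots,\lambda_n)Q_\star^\top$ with $Q_\star$ orthogonal and $\lambda_1\ge\dots\ge\lambda_r>0=\lambda_{r+1}=\dots=\lambda_{n-s}>\lambda_{n-s+1}\ge\dots\ge\lambda_n$.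 Index sets $\alpha=\{1..r\}$, $\beta=\{r+1..n-s\}$, $\gamma=\{n-s+1..n\}$; $\hat H=Q_\star^\top HQ_\star$ with blocks $\hat H_{\alpha\alpha},\hat H_{\beta\alpha},\hat H_{\gamma\alpha},\hat H_{\beta\beta},\hat H_{\gamma\beta},\hat H_{\gamma\gamma}$. $\tilde\Theta\in\mathbb R^{s\times r}$, $\tilde\Theta_{ij}=\lambda_j/(\lambda_j-\lambda_{n-s+i})$, $\tilde\Theta^\perp=E_{s\times r}-\tilde\Theta$ (all-ones minus $\tilde\Theta$). $\widetilde{\mathcal D}(H)=Q_\star\begin{pmatrix}\hat H_{\alpha\alpha}&\hat H_{\beta\alpha}^\top&\tilde\Theta^\top\circ\hat H_{\gamma\alpha}^\top\\\hat H_{\beta\alpha}&\Pi_{\mathbb S^{|\beta|}_+}(\hat H_{\beta\beta})&0\\\tilde\Theta\circ\hat H_{\gamma\alpha}&0&0\end{pmatrix}Q_\star^\top$, $\widetilde{\mathcal D}^\perp(H)=H-\widetilde{\mathcal D}(H)$, $\widetilde{\mathcal M}(H)=\mathcal P\widetilde{\mathcal D}^\perp(H)+\mathcal P^\perp\widetilde{\mathcal D}(H)$. *)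

From HB Require Import structures.
From mathcomp Require Import all_boot all_order all_algebra.
From mathcomp Require Import boolp classical_sets reals.
Set Implicit Arguments. Unset Strict Implicit. Unset Printing Implicit Defensive.
Import Order.TTheory GRing.Theory Num.Theory.
Local Open Scope ring_scope.

Section Defs.
Variable R : realType.

Definition frob (p q : nat) (A B : 'M[R]_(p, q)) : R :=
  \sum_(i < p) \sum_(j < q) A i j * B i j.

Definition hadamard (p q : nat) (A B : 'M[R]_(p, q)) : 'M[R]_(p, q) :=
  \matrix_(i, j) (A i j * B i j).

Definition symmx (k : nat) (A : 'M[R]_k) : Prop := A^T = A.

Definition psd (k : nat) (A : 'M[R]_k) : Prop :=
  symmx A /\ forall v : 'cV[R]_k, 0 <= (v^T *m A *m v) 0 0.

Definition proj_psd (k : nat) (M : 'M[R]_k) : 'M[R]_k :=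
  xget 0 (fun Y : 'M[R]_k => psd Y /\
          forall Y' : 'M[R]_k, psd Y' -> frob (M - Y) (M - Y) <= frob (M - Y') (M - Y')).

Definition Aop (m k : nat) (As : 'I_m -> 'M[R]_k) (X : 'M[R]_k) : 'cV[R]_m :=
  \col_i frob (As i) X.
Definition Aadj (m k : nat) (As : 'I_m -> 'M[R]_k) (y : 'cV[R]_m) : 'M[R]_k :=
  \sum_(i < m) y i 0 *: As i.
Definition AAadj (m k : nat) (As : 'I_m -> 'M[R]_k) : 'M[R]_m :=
  \matrix_(i, j) frob (As i) (As j).
Definition Pop (m k : nat) (As : 'I_m -> 'M[R]_k) (H : 'M[R]_k) : 'M[R]_k :=
  Aadj As (invmx (AAadj As) *m Aop As H).
Definition Pperp (m k : nat) (As : 'I_m -> 'M[R]_k) (H : 'M[R]_k) : 'M[R]_k :=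
  H - Pop As H.

(* Index sets: n = r + b + s with alpha = first r, beta = next b (= n-r-s),
   gamma = last s indices. *)
Definition alpha (r b s : nat) (j : 'I_r) : 'I_(r + b + s) := lshift s (lshift b j).
Definition gamma (r b s : nat) (i : 'I_s) : 'I_(r + b + s) := rshift (r + b) i.

Definition Theta (r b s : nat) (lam : 'rV[R]_(r + b + s)) : 'M[R]_(s, r) :=
  \matrix_(i, j) (lam 0 (alpha b s j) / (lam 0 (alpha b s j) - lam 0 (gamma r b i))).
Definition Thetap (r b s : nat) (lam : 'rV[R]_(r + b + s)) : 'M[R]_(s, r) :=
  const_mx 1 - Theta lam.

Definition Hhat (k : nat) (Q H : 'M[R]_k) : 'M[R]_k := Q^T *m H *m Q.
Definition blk_aa (r b s : nat) (M : 'M[R]_(r + b + s)) : 'M[R]_r := ulsubmx (ulsubmx M).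
Definition blk_ba (r b s : nat) (M : 'M[R]_(r + b + s)) : 'M[R]_(b, r) := dlsubmx (ulsubmx M).
Definition blk_bb (r b s : nat) (M : 'M[R]_(r + b + s)) : 'M[R]_b := drsubmx (ulsubmx M).
Definition blk_ga (r b s : nat) (M : 'M[R]_(r + b + s)) : 'M[R]_(s, r) := lsubmx (dlsubmx M).

Definition Dt (r b s : nat) (Q : 'M[R]_(r + b + s)) (lam : 'rV[R]_(r + b + s))
    (H : 'M[R]_(r + b + s)) : 'M[R]_(r + b + s) :=
  let Hh := Hhat Q H in
  let TH := hadamard (Theta lam) (blk_ga Hh) in
  Q *m block_mx
        (block_mx (blk_aa Hh) (blk_ba Hh)^T (blk_ba Hh) (proj_psd (blk_bb Hh)))
        (col_mx (TH^T) 0)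
        (row_mx TH 0)
        0
    *m Q^T.

Definition Dtp (r b s : nat) (Q : 'M[R]_(r + b + s)) (lam : 'rV[R]_(r + b + s))
    (H : 'M[R]_(r + b + s)) : 'M[R]_(r + b + s) := H - Dt Q lam H.

Definition Mt (m r b s : nat) (As : 'I_m -> 'M[R]_(r + b + s)) (Q : 'M[R]_(r + b + s))
    (lam : 'rV[R]_(r + b + s)) (H : 'M[R]_(r + b + s)) : 'M[R]_(r + b + s) :=
  Pop As (Dtp Q lam H) + Pperp As (Dt Q lam H).

End Defs.

(* In the eigenbasis [Q] of [Z], [D~(H)] and [D~perp(H)] are block matrices
   whose inner product only sees the beta-beta block, where
   [<Pi(M), M - Pi(M)> = 0] because [Pi] is the metric projection onto a cone,
   and the gamma-alpha blocks [Theta o H_ga] and [Theta^perp o H_ga], met twice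
   by symmetry.  As [0 < Theta < 1] entrywise, this term is a positively
   weighted sum of the squares of the entries of [H_ga].  The second identity
   holds for any orthogonal projection [P] and any splitting [H = D + E]:
   [||D + E||^2 - ||P E + P^perp D||^2 = ||P D||^2 + ||P^perp E||^2 + 2 <D, E>]. *)
From HB Require Import structures.
From mathcomp Require Import all_boot all_order all_algebra.
From mathcomp Require Import boolp classical_sets reals.
From mathcomp Require Import ring lra.
Import Order.TTheory GRing.Theory Num.Theory.
Local Open Scope ring_scope.
Set Implicit Arguments. Unset Strict Implicit.

Lemma eq0_of_quadratic_ge0 (R : realFieldType) (c d : R) : 0 <= d ->
  (forall u, u <= 1 -> 0 <= 2 * u * c + u ^+ 2 * d) -> c = 0.
Proof.
move=> d_ge0 quad_ge0; set K := d + `|c| + 1.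
have K_gt0 : 0 < K by rewrite /K; have := normr_ge0 c; lra.
(* at [u = - c / K] the quadratic is [c^2 (d - 2 K) / K^2], and [d - 2 K < 0] *)
have u_le1 : - c / K <= 1.
  by rewrite ler_pdivrMr // mul1r /K; have := ler_norm (- c); rewrite normrN; lra.
have := quad_ge0 _ u_le1; set u := - c / K => q_ge0.
have cE : c = - (u * K) by rewrite /u mulrVK ?opprK // unitfE gt_eqF.
have : 0 <= c ^+ 2 * (d - 2 * K).
  have -> : c ^+ 2 * (d - 2 * K) = (2 * u * c + u ^+ 2 * d) * K ^+ 2.
    by rewrite {1 2}cE; ring.
  exact: mulr_ge0 q_ge0 (sqr_ge0 K).
have : d - 2 * K < 0 by rewrite /K; have := normr_ge0 c; lra.
by move=> dK c2_ge0; apply/eqP; rewrite -sqrf_eq0 eq_le sqr_ge0 andbT; nra.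
Qed.

Section Frobenius.
Variable R : realType.
Implicit Types (p q : nat).

Lemma frobC p q (A B : 'M[R]_(p, q)) : frob A B = frob B A.
Proof. by apply: eq_bigr => i _; apply: eq_bigr => j _; rewrite mulrC. Qed.

Lemma frobDl p q (A B C : 'M[R]_(p, q)) : frob (A + B) C = frob A C + frob B C.
Proof.
rewrite /frob -big_split; apply: eq_bigr => i _; rewrite -big_split.
by apply: eq_bigr => j _; rewrite mxE mulrDl.
Qed.

Lemma frobNl p q (A C : 'M[R]_(p, q)) : frob (- A) C = - frob A C.
Proof.
rewrite /frob -sumrN; apply: eq_bigr => i _; rewrite -sumrN.
by apply: eq_bigr => j _; rewrite mxE mulNr.
Qed.

Lemma frobZl p q k (A C : 'M[R]_(p, q)) : frob (k *: A) C = k * frob A C.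
Proof.
rewrite /frob mulr_sumr; apply: eq_bigr => i _; rewrite mulr_sumr.
by apply: eq_bigr => j _; rewrite mxE mulrA.
Qed.

Lemma frobDr p q (A B C : 'M[R]_(p, q)) : frob C (A + B) = frob C A + frob C B.
Proof. by rewrite !(frobC C) frobDl. Qed.

Lemma frobNr p q (A C : 'M[R]_(p, q)) : frob C (- A) = - frob C A.
Proof. by rewrite !(frobC C) frobNl. Qed.

Lemma frobZr p q k (A C : 'M[R]_(p, q)) : frob C (k *: A) = k * frob C A.
Proof. by rewrite !(frobC C) frobZl. Qed.

Lemma frobBr p q (A B C : 'M[R]_(p, q)) : frob C (A - B) = frob C A - frob C B.
Proof. by rewrite frobDr frobNr. Qed.

Lemma frob0l p q (A : 'M[R]_(p, q)) : frob 0 A = 0.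
Proof. by rewrite -(scale0r 0) frobZl mul0r. Qed.

Lemma frob0r p q (A : 'M[R]_(p, q)) : frob A 0 = 0.
Proof. by rewrite frobC frob0l. Qed.

Lemma frob_sumr p q (I : Type) (s : seq I) (P : pred I) (F : I -> 'M[R]_(p, q)) C :
  frob C (\sum_(i <- s | P i) F i) = \sum_(i <- s | P i) frob C (F i).
Proof. exact: (big_morph (frob C) (fun A B => frobDr A B C) (frob0r C)). Qed.

Lemma frob_suml p q (I : Type) (s : seq I) (P : pred I) (F : I -> 'M[R]_(p, q)) C :
  frob (\sum_(i <- s | P i) F i) C = \sum_(i <- s | P i) frob (F i) C.
Proof. by rewrite frobC frob_sumr; apply: eq_bigr => i _; rewrite frobC. Qed.

Lemma frob_tr p q (A B : 'M[R]_(p, q)) : frob A^T B^T = frob A B.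
Proof. by rewrite /frob exchange_big; apply: eq_bigr => i _; apply: eq_bigr => j _; rewrite !mxE. Qed.

Lemma frob_trace p q (A B : 'M[R]_(p, q)) : frob A B = \tr (A^T *m B).
Proof.
rewrite /frob /mxtrace exchange_big; apply: eq_bigr => j _; rewrite mxE.
by apply: eq_bigr => i _; rewrite mxE.
Qed.

Lemma frob_mulmxl p q l (A : 'M[R]_(p, q)) (B : 'M[R]_(q, l)) C :
  frob (A *m B) C = frob B (A^T *m C).
Proof. by rewrite !frob_trace trmx_mul mulmxA. Qed.

Lemma frob_conj_orth k (Q A B : 'M[R]_k) : Q^T *m Q = 1%:M ->
  frob (Q *m A *m Q^T) (Q *m B *m Q^T) = frob A B.
Proof.
move=> QTQ; rewrite !frob_trace !trmx_mul trmxK -!mulmxA (mulmxA Q^T Q) QTQ mul1mx.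
by rewrite mxtrace_mulC -!mulmxA QTQ mulmx1.
Qed.

Lemma frob_block p1 p2 q1 q2 (a a' : 'M[R]_(p1, q1)) (b b' : 'M[R]_(p1, q2))
    (c c' : 'M[R]_(p2, q1)) (d d' : 'M[R]_(p2, q2)) :
  frob (block_mx a b c d) (block_mx a' b' c' d') =
  frob a a' + frob b b' + frob c c' + frob d d'.
Proof.
rewrite /frob big_split_ord /= -!addrA -big_split /= addrA -big_split /=.
by congr (_ + _); apply: eq_bigr => i _; rewrite big_split_ord /=;
  congr (_ + _); apply: eq_bigr => j _; rewrite ?block_mxEul ?block_mxEur
  ?block_mxEdl ?block_mxEdr.
Qed.

Lemma frob_col p1 p2 q (a a' : 'M[R]_(p1, q)) (c c' : 'M[R]_(p2, q)) :
  frob (col_mx a c) (col_mx a' c') = frob a a' + frob c c'.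
Proof.
by rewrite /frob big_split_ord /=; congr (_ + _); apply: eq_bigr => i _;
  apply: eq_bigr => j _; rewrite ?col_mxEu ?col_mxEd.
Qed.

Lemma frob_row p q1 q2 (a a' : 'M[R]_(p, q1)) (c c' : 'M[R]_(p, q2)) :
  frob (row_mx a c) (row_mx a' c') = frob a a' + frob c c'.
Proof.
rewrite /frob -big_split /=; apply: eq_bigr => i _.
by rewrite big_split_ord /=; congr (_ + _); apply: eq_bigr => j _;
  rewrite ?row_mxEl ?row_mxEr.
Qed.

Lemma hadamard1l p q (G : 'M[R]_(p, q)) : hadamard (const_mx 1) G = G.
Proof. by apply/matrixP => i j; rewrite !mxE mul1r. Qed.

Lemma hadamardBl p q (T T' G : 'M[R]_(p, q)) :
  hadamard (T - T') G = hadamard T G - hadamard T' G.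
Proof. by apply/matrixP => i j; rewrite !mxE mulrBl. Qed.

Lemma hadamard0r p q (T : 'M[R]_(p, q)) : hadamard T 0 = 0.
Proof. by apply/matrixP => i j; rewrite !mxE mulr0. Qed.

Lemma frob_hadamard p q (T T' G : 'M[R]_(p, q)) :
  frob (hadamard T G) (hadamard T' G) = frob (hadamard (hadamard T T') G) G.
Proof. by apply: eq_bigr => i _; apply: eq_bigr => j _; rewrite !mxE; ring. Qed.

Lemma frob_hadamard_ge0 p q (W G : 'M[R]_(p, q)) :
  (forall i j, 0 <= W i j) -> 0 <= frob (hadamard W G) G.
Proof.
move=> W_ge0; rewrite sumr_ge0 // => i _; rewrite sumr_ge0 // => j _.
by rewrite mxE -mulrA mulr_ge0 // -expr2 sqr_ge0.
Qed.

Lemma frob_hadamard_eq0 p q (W G : 'M[R]_(p, q)) :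
  (forall i j, 0 < W i j) -> frob (hadamard W G) G = 0 -> G = 0.
Proof.
move=> W_gt0 WG0; apply/matrixP => i j; rewrite mxE.
have term_ge0 i' j' : 0 <= hadamard W G i' j' * G i' j'.
  by rewrite mxE -mulrA mulr_ge0 ?(ltW (W_gt0 _ _)) // -expr2 sqr_ge0.
have row_eq0 := psumr_eq0P (fun i' _ => sumr_ge0 _ (fun j' _ => term_ge0 i' j')) WG0 (i := i) isT.
move: (psumr_eq0P (fun j' _ => term_ge0 i j') row_eq0 (i := j) isT) => /eqP.
by rewrite mxE -mulrA mulf_eq0 gt_eqF //= mulf_eq0 orbb => /eqP.
Qed.

Lemma frob_ge0 p q (A : 'M[R]_(p, q)) : 0 <= frob A A.
Proof. by rewrite -{1}(hadamard1l A) frob_hadamard_ge0 // => i j; rewrite mxE. Qed.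

Lemma frob_eq0 p q (A : 'M[R]_(p, q)) : frob A A = 0 -> A = 0.
Proof. by rewrite -{1}(hadamard1l A); apply: frob_hadamard_eq0 => i j; rewrite mxE. Qed.

End Frobenius.

Section MetricProjection.
Variable R : realType.

Lemma cone_proj_orth p q (K : 'M[R]_(p, q) -> Prop) (M Y : 'M[R]_(p, q)) :
  (forall t Z, 0 <= t -> K Z -> K (t *: Z)) -> K Y ->
  (forall Z, K Z -> frob (M - Y) (M - Y) <= frob (M - Z) (M - Z)) ->
  frob Y (M - Y) = 0.
Proof.
move=> K_cone KY Y_min; apply: eq0_of_quadratic_ge0 (frob_ge0 Y) _ => u u_le1.
have := Y_min _ (K_cone (1 - u) _ (ltac:(lra) : 0 <= 1 - u) KY).
have -> : M - (1 - u) *: Y = (M - Y) + u *: Y.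
  by rewrite scalerBl scale1r opprB addrCA addrC.
move: (M - Y) => E; rewrite !(frobDl, frobDr, frobZl, frobZr) (frobC E Y); nra.
Qed.

Lemma psd_scale k t (Y : 'M[R]_k) : 0 <= t -> psd Y -> psd (t *: Y).
Proof.
move=> t_ge0 [Ysym Y_ge0]; split; first by rewrite /symmx linearZ /= Ysym.
by move=> v; rewrite -scalemxAr -scalemxAl mxE mulr_ge0.
Qed.

Lemma proj_psd_orth k (M : 'M[R]_k) : frob (proj_psd M) (M - proj_psd M) = 0.
Proof.
rewrite /proj_psd; case: xgetP => [Y _ [psdY Y_min] | _]; last by rewrite frob0l.
by apply: (cone_proj_orth (K := @psd R k)) psdY Y_min => t Z; apply: psd_scale.
Qed.

End MetricProjection.

Section OrthogonalProjection.
Variables (R : realType) (k : nat) (p : 'M[R]_k -> 'M[R]_k).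
(* for linear [p], this says that [p] is self-adjoint and idempotent *)
Hypothesis p_orth : forall X Y, frob (p X) Y = frob (p X) (p Y).

Lemma frob_swap_proj (D E : 'M[R]_k) :
  frob (D + E) (D + E) - frob (p E + (D - p D)) (p E + (D - p D)) =
  frob (p D) (p D) + frob (E - p E) (E - p E) + 2 * frob D E.
Proof.
rewrite !(frobDl, frobDr, frobNl, frobNr).
have := p_orth D E; have := p_orth E D; have := p_orth D D; have := p_orth E E.
have := frobC D E; have := frobC (p D) E; have := frobC (p E) D.
have := frobC (p D) (p E); have := frobC (p D) D; have := frobC (p E) E.
lra.
Qed.

End OrthogonalProjection.

Section ConstraintMap.
Variables (R : realType) (m k : nat) (As : 'I_m -> 'M[R]_k).

Lemma frob_Aadj v Y : frob (Aadj As v) Y = frob v (Aop As Y).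
Proof.
rewrite frob_suml {2}/frob; apply: eq_bigr => i _.
by rewrite frobZl big_ord1 mxE.
Qed.

Lemma Aop_Aadj v : Aop As (Aadj As v) = AAadj As *m v.
Proof.
apply/matrixP => i j; rewrite (ord1 j) !mxE frob_sumr.
by apply: eq_bigr => l _; rewrite frobZr mxE mulrC.
Qed.

Lemma AAadj_sym : (AAadj As)^T = AAadj As.
Proof. by apply/matrixP => i j; rewrite !mxE frobC. Qed.

Hypothesis Aop_surj : forall v : 'cV[R]_m, exists Y : 'M[R]_k, Aop As Y = v.

Lemma AAadj_unit : AAadj As \in unitmx.
Proof.
rewrite -row_free_unit; apply: inj_row_free => u uG0; set w := u^T.
have Gw0 : AAadj As *m w = 0 by rewrite /w -AAadj_sym -trmx_mul uG0 trmx0.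
have Aadj_w0 : Aadj As w = 0 by apply: frob_eq0; rewrite frob_Aadj Aop_Aadj Gw0 frob0r.
have [Y AY] := Aop_surj w.
have /frob_eq0 w0 : frob w w = 0 by rewrite -{2}AY -frob_Aadj Aadj_w0 frob0l.
by rewrite -[u]trmxK -/w w0 trmx0.
Qed.

Lemma Pop_idem X : Pop As (Pop As X) = Pop As X.
Proof. by rewrite {1}/Pop Aop_Aadj !mulmxA mulVmx ?AAadj_unit // mul1mx. Qed.

Lemma Pop_sym X Y : frob (Pop As X) Y = frob X (Pop As Y).
Proof.
rewrite /Pop frob_Aadj [RHS]frobC frob_Aadj frob_mulmxl [RHS]frobC.
by rewrite trmx_inv AAadj_sym.
Qed.

Lemma Pop_orth X Y : frob (Pop As X) Y = frob (Pop As X) (Pop As Y).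
Proof. by rewrite -{1}Pop_idem Pop_sym. Qed.

End ConstraintMap.

Section SpectralBlocks.
Variables (R : realType) (r b s : nat).
Implicit Types (M : 'M[R]_(r + b + s)) (lam : 'rV[R]_(r + b + s)).

Lemma symmx_blockE M : M^T = M ->
  M = block_mx (block_mx (blk_aa M) (blk_ba M)^T (blk_ba M) (blk_bb M))
        (col_mx (blk_ga M)^T (rsubmx (dlsubmx M))^T)
        (row_mx (blk_ga M) (rsubmx (dlsubmx M))) (drsubmx M).
Proof.
move=> Msym; have ulsym : (ulsubmx M)^T = ulsubmx M by rewrite trmx_ulsub Msym.
rewrite /blk_aa /blk_ba /blk_bb /blk_ga -tr_row_mx hsubmxK.
by rewrite trmx_dlsub ulsym trmx_dlsub Msym !submxK.
Qed.

Lemma hadamard_Theta_Thetap_gt0 lam :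
  (forall j, 0 < lam 0 (alpha b s j)) -> (forall i, lam 0 (gamma r b i) < 0) ->
  forall i j, 0 < hadamard (Theta lam) (Thetap lam) i j.
Proof.
move=> lam_alpha lam_gamma i j; rewrite !mxE.
have := lam_alpha j; have := lam_gamma i.
move: (lam 0 (alpha b s j)) (lam 0 (gamma r b i)) => x z z_lt0 x_gt0.
have xz_gt0 : 0 < x - z by lra.
have -> : 1 - x / (x - z) = - z / (x - z) by field; rewrite gt_eqF.
by rewrite mulr_gt0 // divr_gt0 // oppr_gt0.
Qed.

Lemma frob_Dt_Dtp Q lam H : Q^T *m Q = 1%:M -> H^T = H ->
  let Hga := blk_ga (Hhat Q H) in
  frob (Dt Q lam H) (Dtp Q lam H) =
    2 * frob (hadamard (Theta lam) Hga) (hadamard (Thetap lam) Hga).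
Proof.
move=> QTQ Hsym Hga; set Hh := Hhat Q H.
have Hh_sym : Hh^T = Hh by rewrite /Hh /Hhat !trmx_mul trmxK Hsym mulmxA.
have HE : H = Q *m Hh *m Q^T.
  by rewrite /Hh /Hhat !mulmxA (mulmx1C QTQ) mul1mx -mulmxA (mulmx1C QTQ) mulmx1.
rewrite /Dtp /Dt /= -/Hh {1}HE -mulmxBl -mulmxBr frob_conj_orth //.
rewrite [X in frob _ (X - _)](symmx_blockE Hh_sym).
rewrite frobBr !frob_block !frob_col !frob_row ?frob0l ?frob0r !frob_tr.
have := proj_psd_orth (blk_bb Hh); rewrite frobBr.
rewrite /Thetap hadamardBl hadamard1l frobBr -/Hh -/Hga; lra.
Qed.

End SpectralBlocks.

Unset Implicit Arguments.

Theorem lemma16 (R : realType) (m r b s : nat)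
  (As : 'I_m -> 'M[R]_(r + b + s)) (bv : 'cV[R]_m) (C : 'M[R]_(r + b + s))
  (X : 'M[R]_(r + b + s)) (y : 'cV[R]_m) (S : 'M[R]_(r + b + s))
  (sigma : R) (Q : 'M[R]_(r + b + s)) (lam : 'rV[R]_(r + b + s))
  (H : 'M[R]_(r + b + s)) :
  (* A_i in S^n, A surjective from S^n onto R^m *)
  (forall i, symmx (As i)) ->
  (forall v : 'cV[R]_m, exists Y : 'M[R]_(r + b + s), symmx Y /\ Aop As Y = v) ->
  (* (X, y, S) is a KKT point of the primal/dual SDP pair *)
  symmx C ->
  Aop As X = bv -> psd X ->
  Aadj As y + S = C -> psd S ->
  frob X S = 0 ->
  (* Z = X - sigma S = Q diag(lambda) Q^T, Q orthogonal *)
  0 < sigma ->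
  Q^T *m Q = 1%:M ->
  X - sigma *: S = Q *m diag_mx lam *m Q^T ->
  (* r = rank X, s = rank S, and the ordering/sign pattern of the eigenvalues *)
  \rank X = r -> \rank S = s ->
  (forall i j : 'I_(r + b + s), (i <= j)%N -> lam 0 j <= lam 0 i) ->
  (forall i : 'I_(r + b + s), (i < r)%N -> 0 < lam 0 i) ->
  (forall i : 'I_(r + b + s), (r <= i)%N -> (i < r + b)%N -> lam 0 i = 0) ->
  (forall i : 'I_(r + b + s), (r + b <= i)%N -> lam 0 i < 0) ->
  (* H in S^n *)
  symmx H ->
  let Hga := blk_ga (Hhat Q H) in
  let ip := frob (hadamard (Theta lam) Hga) (hadamard (Thetap lam) Hga) in
  [/\ frob (Dt Q lam H) (Dtp Q lam H) = 2 * ip,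
      0 <= 2 * ip,
      (frob (Dt Q lam H) (Dtp Q lam H) = 0 <-> Hga = 0) &
      frob H H - frob (Mt As Q lam H) (Mt As Q lam H) =
        frob (Pop As (Dt Q lam H)) (Pop As (Dt Q lam H))
        + frob (Pperp As (Dtp Q lam H)) (Pperp As (Dtp Q lam H))
        + 4 * ip].
Proof.
move=> _ hsurj _ _ _ _ _ _ _ QTQ _ _ _ _ lam_pos _ lam_neg Hsym Hga ip.
have Aop_surj v : exists Y, Aop As Y = v by have [Y [_ AY]] := hsurj v; exists Y.
have W_gt0 := hadamard_Theta_Thetap_gt0
  (fun j => lam_pos (alpha b s j) (ltn_ord j)) (fun i => lam_neg (gamma r b i) (leq_addr i _)).
have ipE : ip = frob (hadamard (hadamard (Theta lam) (Thetap lam)) Hga) Hga.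
  exact: frob_hadamard.
have ip_ge0 : 0 <= ip by rewrite ipE frob_hadamard_ge0 // => i j; exact/ltW/W_gt0.
have DE_ip : frob (Dt Q lam H) (Dtp Q lam H) = 2 * ip by exact: frob_Dt_Dtp.
split => //.
- by rewrite mulr_ge0.
- rewrite DE_ip; split => [ip0 | Hga0]; last by rewrite /ip Hga0 !hadamard0r frob0l mulr0.
  by apply: frob_hadamard_eq0 W_gt0 _; rewrite -ipE; lra.
have DEH : Dt Q lam H + Dtp Q lam H = H by rewrite /Dtp addrC subrK.
rewrite -{1 2}DEH /Mt /Pperp frob_swap_proj; last exact: Pop_orth.
by rewrite DE_ip; ring.
Qed.
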